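(* Let $X$ and $Y$ be Banach spaces and let $T\in B(X)$ and $S\in B(Y)$ be equivalent after extension. If $S$ is compact, then there exists a closed subspace of $Y$ of finite codimension that is topologically isomorphic to a closed subspace of $X$.
   Context: All Banach spaces are complex; $B(X,Y)$ denotes bounded linear operators; invertibility means bounded inverse; $X\oplus Y$ is the $\ell^2$-direct sum and $\mathrm{id}_X$ the identity. Operators $T\in B(X)$ and $S\in B(Y)$ are equivalent after extension if there exist Banach spaces $X'$, $Y'$ and invertible $E\in B(Y\oplus Y',X\oplus X')$, $F\in B(X\oplus X',Y\oplus Y')$ with $\begin{bmatrix}T&0\\0&\mathrm{id}_{X'}\end{bmatrix}=E\begin{bmatrix}S&0\\0&\mathrm{id}_{Y'}\end{bmatrix}F$. *)

From Stdlib Require Import Reals.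
Open Scope R_scope.
Set Implicit Arguments.

Record C := mkC { Re : R ; Im : R }.
Definition C0 : C := mkC 0 0.
Definition C1 : C := mkC 1 0.
Definition Cadd (a b : C) : C := mkC (Re a + Re b) (Im a + Im b).
Definition Cmul (a b : C) : C :=
  mkC (Re a * Re b - Im a * Im b) (Re a * Im b + Im a * Re b).
Definition Cabs (a : C) : R := sqrt (Re a ^ 2 + Im a ^ 2).

Record NVS := mkNVS {
  car :> Type ;
  vzero : car ;
  vadd : car -> car -> car ;
  vopp : car -> car ;
  vscal : C -> car -> car ;
  vnorm : car -> R }.
Arguments vzero {n}.
Arguments vadd {n}.
Arguments vopp {n}.
Arguments vscal {n}.
Arguments vnorm {n}.

Definition vsub {V : NVS} (x y : V) : V := vadd x (vopp y).

Definition conv {V : NVS} (u : nat -> V) (l : V) : Prop :=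
  forall eps, eps > 0 -> exists N, forall n, (n >= N)%nat -> vnorm (vsub (u n) l) < eps.
Definition cauchy {V : NVS} (u : nat -> V) : Prop :=
  forall eps, eps > 0 -> exists N, forall m n, (m >= N)%nat -> (n >= N)%nat ->
    vnorm (vsub (u m) (u n)) < eps.

Record Banach := mkBanach {
  bnvs :> NVS ;
  add_assoc : forall x y z : bnvs, vadd x (vadd y z) = vadd (vadd x y) z ;
  add_comm : forall x y : bnvs, vadd x y = vadd y x ;
  add_zero : forall x : bnvs, vadd vzero x = x ;
  add_opp : forall x : bnvs, vadd (vopp x) x = vzero ;
  scal_one : forall x : bnvs, vscal C1 x = x ;
  scal_assoc : forall (a b : C) (x : bnvs), vscal a (vscal b x) = vscal (Cmul a b) x ;
  scal_distr_v : forall (a : C) (x y : bnvs), vscal a (vadd x y) = vadd (vscal a x) (vscal a y) ;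
  scal_distr_s : forall (a b : C) (x : bnvs), vscal (Cadd a b) x = vadd (vscal a x) (vscal b x) ;
  norm_eq0 : forall x : bnvs, vnorm x = 0 -> x = vzero ;
  norm_scal : forall (a : C) (x : bnvs), vnorm (vscal a x) = Cabs a * vnorm x ;
  norm_triangle : forall x y : bnvs, vnorm (vadd x y) <= vnorm x + vnorm y ;
  complete : forall u : nat -> bnvs, cauchy u -> exists l, conv u l }.

Definition dsum (A B : NVS) : NVS :=
  @mkNVS (A * B)
    (vzero, vzero)
    (fun p q => (vadd (fst p) (fst q), vadd (snd p) (snd q)))
    (fun p => (vopp (fst p), vopp (snd p)))
    (fun c p => (vscal c (fst p), vscal c (snd p)))
    (fun p => sqrt (vnorm (fst p) ^ 2 + vnorm (snd p) ^ 2)).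

Definition linear {A B : NVS} (f : A -> B) : Prop :=
  (forall x y, f (vadd x y) = vadd (f x) (f y)) /\
  (forall c x, f (vscal c x) = vscal c (f x)).

Definition bounded_op {A B : NVS} (f : A -> B) : Prop :=
  linear f /\ exists K, forall x, vnorm (f x) <= K * vnorm x.

Definition invertible {A B : NVS} (f : A -> B) : Prop :=
  bounded_op f /\ exists g : B -> A, bounded_op g /\
    (forall x, g (f x) = x) /\ (forall y, f (g y) = y).

Definition diag_id {A A' : NVS} (T : A -> A) : dsum A A' -> dsum A A' :=
  fun p => (T (fst p), snd p).

Definition equiv_after_ext (X Y : Banach) (T : X -> X) (S : Y -> Y) : Prop :=
  exists (X' Y' : Banach) (E : dsum Y Y' -> dsum X X') (F : dsum X X' -> dsum Y Y'),
    invertible E /\ invertible F /\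
    forall p : dsum X X', @diag_id X X' T p = E (@diag_id Y Y' S (F p)).

(* compact operator: image of every bounded sequence has a convergent
   subsequence (i.e. the image of the unit ball is relatively compact) *)
Definition compact_op {A B : NVS} (f : A -> B) : Prop :=
  bounded_op f /\
  forall u : nat -> A, (exists K, forall n, vnorm (u n) <= K) ->
    exists (phi : nat -> nat) (l : B),
      (forall n, (phi n < phi (S n))%nat) /\ conv (fun n => f (u (phi n))) l.

Definition closed_subspace {V : NVS} (M : V -> Prop) : Prop :=
  M vzero /\
  (forall x y, M x -> M y -> M (vadd x y)) /\
  (forall c x, M x -> M (vscal c x)) /\
  (forall (u : nat -> V) l, (forall n, M (u n)) -> conv u l -> M l).

Fixpoint lin_comb {V : NVS} (n : nat) (c : nat -> C) (e : nat -> V) : V :=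
  match n with
  | O => vzero
  | S k => vadd (lin_comb k c e) (vscal (c k) (e k))
  end.

(* finite codimension: V / M is finite dimensional, i.e. finitely many
   vectors span V modulo M *)
Definition finite_codim {V : NVS} (M : V -> Prop) : Prop :=
  exists (n : nat) (e : nat -> V), forall y : V,
    exists (c : nat -> C) (m : V), M m /\ y = vadd m (lin_comb n c e).

Definition topo_iso {A B : NVS} (M : A -> Prop) (N : B -> Prop) : Prop :=
  exists (f : A -> B) (g : B -> A),
    (forall x, M x -> N (f x)) /\ (forall y, N y -> M (g y)) /\
    (forall x, M x -> g (f x) = x) /\ (forall y, N y -> f (g y) = y) /\
    (forall x y, M x -> M y -> f (vadd x y) = vadd (f x) (f y)) /\
    (forall c x, M x -> f (vscal c x) = vscal c (f x)) /\
    (exists K, forall x, M x -> vnorm (f x) <= K * vnorm x) /\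
    (exists K, forall y, N y -> vnorm (g y) <= K * vnorm y).

(* Let G be the inverse of F.  Evaluating diag(T,1) = E diag(S,1) F at G (y, 0)
   shows that id_Y - L S = b a for bounded operators a : Y -> X, b : X -> Y and
   L : Y -> Y; so K = L S is compact and I - K factors through a.
   By the Riesz theory of I - K, with p its ascent and q its descent, I - K is
   injective, hence (by compactness) bounded below, on the closed range M of
   (I - K)^(p+q), and M has finite codimension because Y = ker (I - K)^(p+q) + M with
   a kernel whose unit ball is compact, hence finite dimensional.  On M we get
   |y| <= c |(I - K) y| <= c |b| |a y|, so a maps M isomorphically onto a(M), which
   is then closed in X. *)

From Stdlib Require Import Reals Lra Lia Classical ClassicalEpsilon.
Open Scope R_scope.

Arguments add_assoc {b0} x y z.
Arguments add_comm {b0} x y.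
Arguments add_zero {b0} x.
Arguments add_opp {b0} x.
Arguments scal_one {b0} x.
Arguments scal_assoc {b0} a b x.
Arguments scal_distr_v {b0} a x y.
Arguments scal_distr_s {b0} a b x.
Arguments norm_eq0 {b0} x.
Arguments norm_scal {b0} a x.
Arguments norm_triangle {b0} x y.
Arguments complete {b0} u.

Definition RtoC (r : R) : C := mkC r 0.

Lemma Cabs_RtoC r : Cabs (RtoC r) = Rabs r.
Proof. unfold Cabs, RtoC; simpl. rewrite <- sqrt_Rsqr_abs. f_equal. unfold Rsqr; ring. Qed.

Lemma Cmul_RtoC a b : Cmul (RtoC a) (RtoC b) = RtoC (a * b).
Proof. unfold Cmul, RtoC; simpl. f_equal; ring. Qed.

Lemma Cadd_RtoC a b : Cadd (RtoC a) (RtoC b) = RtoC (a + b).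
Proof. unfold Cadd, RtoC; simpl. f_equal; ring. Qed.

Section VectorAlgebra.
Context {V : Banach}.
Implicit Types x y z : V.

Lemma vadd_0_r x : vadd x vzero = x.
Proof. rewrite add_comm. apply add_zero. Qed.

Lemma add_opp_r x : vadd x (vopp x) = vzero.
Proof. rewrite add_comm. apply add_opp. Qed.

Lemma vadd_cancel_l x y z : vadd x y = vadd x z -> y = z.
Proof.
  intros H. rewrite <- (add_zero y), <- (add_zero z), <- (add_opp x), <- !add_assoc, H.
  reflexivity.
Qed.

Lemma vscal_RtoC_0 x : vscal (RtoC 0) x = vzero.
Proof.
  apply (vadd_cancel_l (vscal (RtoC 0) x)).
  rewrite vadd_0_r, <- scal_distr_s, Cadd_RtoC, Rplus_0_r. reflexivity.
Qed.

Lemma vscal_vzero c : vscal c (@vzero V) = vzero.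
Proof.
  apply (vadd_cancel_l (vscal c vzero)). rewrite vadd_0_r, <- scal_distr_v, add_zero.
  reflexivity.
Qed.

Lemma vscal_1 x : vscal (RtoC 1) x = x.
Proof. apply scal_one. Qed.

Lemma vscal_RtoC_mul a b x : vscal (RtoC a) (vscal (RtoC b) x) = vscal (RtoC (a * b)) x.
Proof. rewrite scal_assoc, Cmul_RtoC. reflexivity. Qed.

Lemma vopp_scal x : vopp x = vscal (RtoC (-1)) x.
Proof.
  apply (vadd_cancel_l x). rewrite add_opp_r. rewrite <- (vscal_1 x) at 1.
  rewrite <- scal_distr_s, Cadd_RtoC, Rplus_opp_r, vscal_RtoC_0. reflexivity.
Qed.

Lemma vopp_vopp x : vopp (vopp x) = x.
Proof. apply (vadd_cancel_l (vopp x)). rewrite add_opp_r, add_opp. reflexivity. Qed.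

Lemma vopp_add x y : vopp (vadd x y) = vadd (vopp x) (vopp y).
Proof. rewrite !vopp_scal, scal_distr_v. reflexivity. Qed.

Lemma vopp_zero : vopp (@vzero V) = vzero.
Proof. rewrite vopp_scal. apply vscal_vzero. Qed.

Lemma vscal_opp c x : vscal c (vopp x) = vopp (vscal c x).
Proof.
  apply (vadd_cancel_l (vscal c x)). rewrite add_opp_r, <- scal_distr_v, add_opp_r, vscal_vzero.
  reflexivity.
Qed.

Lemma vsub_diag x : vsub x x = vzero.
Proof. apply add_opp_r. Qed.

Lemma vsub_0_r x : vsub x vzero = x.
Proof. unfold vsub. rewrite vopp_zero. apply vadd_0_r. Qed.

Lemma vsub_add_cancel x y : vadd (vsub x y) y = x.
Proof. unfold vsub. rewrite <- add_assoc, add_opp, vadd_0_r. reflexivity. Qed.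

Lemma vadd_sub_cancel x y : vsub (vadd x y) y = x.
Proof. unfold vsub. rewrite <- add_assoc, add_opp_r, vadd_0_r. reflexivity. Qed.

Lemma vsub_eq0 x y : vsub x y = vzero -> x = y.
Proof. intros H. rewrite <- (vsub_add_cancel x y), H. apply add_zero. Qed.

Lemma vsub_swap x y : vsub y x = vopp (vsub x y).
Proof. unfold vsub. rewrite vopp_add, vopp_vopp, add_comm. reflexivity. Qed.

Lemma vsub_chain x y z : vsub x z = vadd (vsub x y) (vsub y z).
Proof. unfold vsub. rewrite <- add_assoc, (add_assoc (vopp y)), add_opp, add_zero. reflexivity. Qed.

Lemma vsub_sub_r x y : vsub x (vsub x y) = y.
Proof. unfold vsub. rewrite vopp_add, vopp_vopp, add_assoc, add_opp_r, add_zero. reflexivity. Qed.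

Lemma vsub_add_r x y z : vsub x (vadd y z) = vsub (vsub x y) z.
Proof. unfold vsub. rewrite vopp_add, add_assoc. reflexivity. Qed.

Lemma vsub_add_add x y x' y' : vsub (vadd x y) (vadd x' y') = vadd (vsub x x') (vsub y y').
Proof.
  unfold vsub. rewrite vopp_add, <- !add_assoc. f_equal.
  rewrite (add_comm y), <- !add_assoc. f_equal. apply add_comm.
Qed.

Lemma vscal_sub c x y : vscal c (vsub x y) = vsub (vscal c x) (vscal c y).
Proof. unfold vsub. rewrite scal_distr_v, vscal_opp. reflexivity. Qed.

Lemma vsub_vscal_RtoC a b x : vsub (vscal (RtoC a) x) (vscal (RtoC b) x) = vscal (RtoC (a - b)) x.
Proof.
  unfold vsub. rewrite vopp_scal, vscal_RtoC_mul, <- scal_distr_s, Cadd_RtoC.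
  f_equal; f_equal; ring.
Qed.

Lemma norm_zero : vnorm (@vzero V) = 0.
Proof. rewrite <- (vscal_RtoC_0 (@vzero V)), norm_scal, Cabs_RtoC, Rabs_R0. ring. Qed.

Lemma norm_scal_RtoC a x : vnorm (vscal (RtoC a) x) = Rabs a * vnorm x.
Proof. rewrite norm_scal, Cabs_RtoC. reflexivity. Qed.

Lemma norm_opp x : vnorm (vopp x) = vnorm x.
Proof. rewrite vopp_scal, norm_scal_RtoC, Rabs_left by lra. ring. Qed.

Lemma norm_ge0 x : 0 <= vnorm x.
Proof. pose proof (norm_triangle x (vopp x)). rewrite add_opp_r, norm_zero, norm_opp in H. lra. Qed.

Lemma norm_sub_sym x y : vnorm (vsub x y) = vnorm (vsub y x).
Proof. rewrite (vsub_swap y x), norm_opp. reflexivity. Qed.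

Lemma norm_sub_triangle x y z : vnorm (vsub x z) <= vnorm (vsub x y) + vnorm (vsub y z).
Proof. rewrite (vsub_chain x y z). apply norm_triangle. Qed.

Lemma norm_reverse_triangle x y : Rabs (vnorm x - vnorm y) <= vnorm (vsub x y).
Proof.
  pose proof (norm_triangle (vsub x y) y). pose proof (norm_triangle (vsub y x) x).
  rewrite vsub_add_cancel in *. rewrite norm_sub_sym in H0. apply Rabs_le. lra.
Qed.

Definition normalize x : V := vscal (RtoC (/ vnorm x)) x.

Lemma norm_normalize x : 0 < vnorm x -> vnorm (normalize x) = 1.
Proof.
  intros H. unfold normalize. rewrite norm_scal_RtoC, Rabs_right.
  - field; lra.
  - left; apply Rinv_0_lt_compat; auto.
Qed.

End VectorAlgebra.

Section Subspaces.
Context {V : Banach}.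
Variable Z : V -> Prop.
Hypothesis HZ : closed_subspace Z.

Lemma subspace_add x y : Z x -> Z y -> Z (vadd x y).
Proof. destruct HZ as [_ [H _]]; auto. Qed.

Lemma subspace_scal c x : Z x -> Z (vscal c x).
Proof. destruct HZ as [_ [_ [H _]]]; auto. Qed.

Lemma subspace_sub x y : Z x -> Z y -> Z (vsub x y).
Proof. intros Hx Hy. unfold vsub. rewrite vopp_scal. apply subspace_add, subspace_scal; auto. Qed.

Lemma subspace_closed (u : nat -> V) l : (forall n, Z (u n)) -> conv u l -> Z l.
Proof. destruct HZ as [_ [_ [_ H]]]; apply H. Qed.

End Subspaces.

Section LinearMaps.
Context {A B : Banach}.
Variable f : A -> B.
Hypothesis Hf : linear f.

Lemma linear_add x y : f (vadd x y) = vadd (f x) (f y).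
Proof. apply Hf. Qed.

Lemma linear_scal c x : f (vscal c x) = vscal c (f x).
Proof. apply Hf. Qed.

Lemma linear_zero : f vzero = vzero.
Proof. apply (vadd_cancel_l (f vzero)). rewrite <- linear_add, !vadd_0_r. reflexivity. Qed.

Lemma linear_sub x y : f (vsub x y) = vsub (f x) (f y).
Proof. unfold vsub. rewrite linear_add, !vopp_scal, linear_scal. reflexivity. Qed.

End LinearMaps.

Lemma bounded_op_pos {A B : Banach} (f : A -> B) : bounded_op f ->
  exists K, 0 < K /\ forall x, vnorm (f x) <= K * vnorm x.
Proof.
  intros [_ [K HK]]. exists (Rabs K + 1). split.
  - pose proof (Rabs_pos K); lra.
  - intros x. pose proof (HK x). pose proof (norm_ge0 x). pose proof (Rle_abs K). nra.
Qed.

Lemma bounded_op_id {A : Banach} : bounded_op (fun x : A => x).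
Proof. split. split; auto. exists 1. intros; lra. Qed.

Lemma bounded_op_opp {A : Banach} : bounded_op (@vopp A).
Proof.
  split. split.
  - apply vopp_add.
  - intros; symmetry; apply vscal_opp.
  - exists 1. intros; rewrite norm_opp; lra.
Qed.

Lemma bounded_op_add {A B : Banach} (f g : A -> B) :
  bounded_op f -> bounded_op g -> bounded_op (fun x => vadd (f x) (g x)).
Proof.
  intros Hf Hg.
  destruct (bounded_op_pos f Hf) as [Kf [_ Bf]], (bounded_op_pos g Hg) as [Kg [_ Bg]].
  split. split.
  - intros x y. rewrite (linear_add f), (linear_add g) by apply Hf || apply Hg.
    rewrite <- !add_assoc. f_equal. rewrite !add_assoc. f_equal. apply add_comm.
  - intros c x. rewrite (linear_scal f), (linear_scal g) by apply Hf || apply Hg.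
    symmetry; apply scal_distr_v.
  - exists (Kf + Kg). intros x. eapply Rle_trans. apply norm_triangle.
    pose proof (Bf x); pose proof (Bg x); lra.
Qed.

Lemma bounded_op_comp {A B D : Banach} (f : B -> D) (g : A -> B) :
  bounded_op f -> bounded_op g -> bounded_op (fun x => f (g x)).
Proof.
  intros Hf Hg.
  destruct (bounded_op_pos f Hf) as [Kf [Pf Bf]], (bounded_op_pos g Hg) as [Kg [_ Bg]].
  split. split.
  - intros x y. rewrite (linear_add g), (linear_add f) by apply Hf || apply Hg. reflexivity.
  - intros c x. rewrite (linear_scal g), (linear_scal f) by apply Hf || apply Hg. reflexivity.
  - exists (Kf * Kg). intros x. eapply Rle_trans. apply Bf.
    rewrite Rmult_assoc. apply Rmult_le_compat_l; [lra | apply Bg].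
Qed.

Lemma bounded_op_sub {A B : Banach} (f g : A -> B) :
  bounded_op f -> bounded_op g -> bounded_op (fun x => vsub (f x) (g x)).
Proof.
  intros Hf Hg. apply bounded_op_add; auto. apply (bounded_op_comp vopp g); auto.
  apply bounded_op_opp.
Qed.

Section Convergence.
Context {V : Banach}.
Implicit Types (u v : nat -> V) (l m : V).

Lemma conv_unique u l m : conv u l -> conv u m -> l = m.
Proof.
  intros Hl Hm. apply vsub_eq0, norm_eq0. pose proof (norm_ge0 (vsub l m)) as Hd.
  destruct (Rle_lt_dec (vnorm (vsub l m)) 0) as [Hle | Hlt]; [lra | exfalso].
  destruct (Hl (vnorm (vsub l m) / 2)) as [N1 HN1]; [lra |].
  destruct (Hm (vnorm (vsub l m) / 2)) as [N2 HN2]; [lra |].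
  specialize (HN1 (N1 + N2)%nat ltac:(lia)). specialize (HN2 (N1 + N2)%nat ltac:(lia)).
  pose proof (norm_sub_triangle l (u (N1 + N2)%nat) m). rewrite (norm_sub_sym l (u _)) in H. lra.
Qed.

Lemma conv_const l : conv (fun _ => l) l.
Proof. intros e He. exists O. intros. rewrite vsub_diag, norm_zero. lra. Qed.

Lemma conv_ext u v l : (forall n, u n = v n) -> conv u l -> conv v l.
Proof. intros E H e He. destruct (H e He) as [N HN]. exists N. intros. rewrite <- E. auto. Qed.

Lemma conv_add u v l m : conv u l -> conv v m -> conv (fun n => vadd (u n) (v n)) (vadd l m).
Proof.
  intros Hu Hv e He. destruct (Hu (e / 2)) as [N1 HN1]; [lra |].
  destruct (Hv (e / 2)) as [N2 HN2]; [lra |].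
  exists (N1 + N2)%nat. intros n Hn. rewrite vsub_add_add. eapply Rle_lt_trans. apply norm_triangle.
  specialize (HN1 n ltac:(lia)). specialize (HN2 n ltac:(lia)). lra.
Qed.

Lemma conv_subseq u l (phi : nat -> nat) :
  (forall n, (phi n < phi (S n))%nat) -> conv u l -> conv (fun n => u (phi n)) l.
Proof.
  intros Hphi H e He. destruct (H e He) as [N HN]. exists N. intros n Hn. apply HN.
  enough (forall k, (k <= phi k)%nat) by (specialize (H0 n); lia).
  induction k; [lia |]. specialize (Hphi k). lia.
Qed.

Lemma conv_cauchy u l : conv u l -> cauchy u.
Proof.
  intros H e He. destruct (H (e / 2)) as [N HN]; [lra |]. exists N. intros m n Hm Hn.
  pose proof (norm_sub_triangle (u m) l (u n)). rewrite (norm_sub_sym l) in H0.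
  pose proof (HN m Hm). pose proof (HN n Hn). lra.
Qed.

Lemma conv_bounded u l : conv u l -> exists B, forall n, vnorm (u n) <= B.
Proof.
  intros H. destruct (H 1) as [N HN]; [lra |].
  assert (Hfin : forall k, exists B, forall n, (n < k)%nat -> vnorm (u n) <= B).
  { induction k as [| k [B HB]].
    - exists 0. intros; lia.
    - exists (Rmax B (vnorm (u k))). intros n Hn. destruct (Nat.eq_dec n k) as [-> |].
      + apply Rmax_r.
      + eapply Rle_trans; [apply HB; lia | apply Rmax_l]. }
  destruct (Hfin N) as [B HB]. exists (Rmax B (vnorm l + 1)). intros n.
  destruct (Nat.lt_ge_cases n N) as [Hn | Hn].
  - eapply Rle_trans; [apply HB; auto | apply Rmax_l].
  - eapply Rle_trans; [| apply Rmax_r]. specialize (HN n Hn).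
    pose proof (norm_triangle (vsub (u n) l) l). rewrite vsub_add_cancel in H0. lra.
Qed.

Lemma conv_norm_const u l r : conv u l -> (forall n, vnorm (u n) = r) -> vnorm l = r.
Proof.
  intros H Hr. destruct (Req_dec (vnorm l) r) as [| Hne]; auto. exfalso.
  destruct (H (Rabs (vnorm l - r))) as [N HN]. { apply Rabs_pos_lt. lra. }
  specialize (HN N (le_n _)). pose proof (norm_reverse_triangle (u N) l).
  rewrite Hr, Rabs_minus_sym in H0. lra.
Qed.

Lemma conv_rate u l : (forall n, vnorm (vsub (u n) l) <= / INR (S n)) -> conv u l.
Proof.
  intros H e He. destruct (archimed_cor1 e He) as [N [HN PN]]. exists N. intros n Hn.
  eapply Rle_lt_trans; [apply H |]. eapply Rle_lt_trans; [| apply HN].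
  apply Rinv_le_contravar; [apply lt_0_INR; lia | apply le_INR; lia].
Qed.

End Convergence.

Lemma conv_bounded_op {A B : Banach} (f : A -> B) (u : nat -> A) l :
  bounded_op f -> conv u l -> conv (fun n => f (u n)) (f l).
Proof.
  intros Hf H e He. destruct (bounded_op_pos f Hf) as [K [HK Bf]].
  destruct (H (e / K)) as [N HN]. { apply Rdiv_lt_0_compat; lra. }
  exists N. intros n Hn. rewrite <- linear_sub by apply Hf. eapply Rle_lt_trans; [apply Bf |].
  specialize (HN n Hn). apply (Rmult_lt_compat_l K) in HN; auto.
  replace (K * (e / K)) with e in HN by (field; lra). exact HN.
Qed.

Lemma conv_sub {V : Banach} (u v : nat -> V) l m :
  conv u l -> conv v m -> conv (fun n => vsub (u n) (v n)) (vsub l m).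
Proof.
  intros Hu Hv. apply conv_add; auto. apply (conv_bounded_op vopp); auto. apply bounded_op_opp.
Qed.

Lemma conv_scal_RtoC {V : Banach} (a : nat -> R) b (v : V) :
  Un_cv a b -> conv (fun m => vscal (RtoC (a m)) v) (vscal (RtoC b) v).
Proof.
  intros H e He. pose proof (norm_ge0 v).
  destruct (H (e / (vnorm v + 1))) as [N HN]. { apply Rdiv_lt_0_compat; lra. }
  exists N. intros n Hn. rewrite vsub_vscal_RtoC, norm_scal_RtoC.
  specialize (HN n Hn). unfold R_dist in HN. pose proof (Rabs_pos (a n - b)).
  apply (Rmult_lt_compat_r (vnorm v + 1)) in HN; [| lra].
  replace (e / (vnorm v + 1) * (vnorm v + 1)) with e in HN by (field; lra). nra.
Qed.

Lemma ker_closed {A B : Banach} (f : A -> B) :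
  bounded_op f -> closed_subspace (fun x => f x = vzero).
Proof.
  intros Hf. pose proof (proj1 Hf) as Hl. split; [| split; [| split]].
  - apply linear_zero, Hl.
  - intros x y Hx Hy. rewrite linear_add, Hx, Hy by auto. apply add_zero.
  - intros c x Hx. rewrite linear_scal, Hx by auto. apply vscal_vzero.
  - intros u l Hu H. apply (conv_unique (fun n => f (u n))).
    + apply conv_bounded_op; auto.
    + apply (conv_ext (fun _ => vzero)); [intros; rewrite Hu; auto | apply conv_const].
Qed.

Lemma div_le_inv_of_mul_lt a t n : 0 < t -> 0 < n -> n * a < t -> a / t <= / n.
Proof.
  intros Ht Hn H. apply (Rmult_le_reg_l (t * n)); [nra |].
  replace (t * n * (a / t)) with (n * a) by (field; lra).
  replace (t * n * / n) with t by (field; lra). lra.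
Qed.

Lemma norm_linear_normalize {A B : Banach} (f : A -> B) x : linear f -> 0 < vnorm x ->
  vnorm (f (normalize x)) = vnorm (f x) / vnorm x.
Proof.
  intros Hf Hx. unfold normalize. rewrite linear_scal, norm_scal_RtoC by auto.
  rewrite Rabs_right by (left; apply Rinv_0_lt_compat; auto). unfold Rdiv. ring.
Qed.

Section RieszLemma.
Context {V : Banach}.
Variable Z : V -> Prop.
Hypothesis HZ : closed_subspace Z.

Lemma closed_subspace_dist_pos x : ~ Z x ->
  exists d, 0 < d /\ forall z, Z z -> d <= vnorm (vsub x z).
Proof.
  intros Hx. apply NNPP. intros Hn. apply Hx.
  assert (Hnear : forall n, exists z, Z z /\ vnorm (vsub z x) <= / INR (S n)).
  { intros n. apply NNPP. intros Hm. apply Hn. exists (/ INR (S n)). split.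
    - apply Rinv_0_lt_compat, lt_0_INR. lia.
    - intros z Hz. apply Rnot_lt_le. intros Hlt. apply Hm. exists z.
      rewrite norm_sub_sym. split; auto; lra. }
  apply choice in Hnear. destruct Hnear as [z Hz].
  apply (subspace_closed Z HZ z); [apply Hz | apply conv_rate, Hz].
Qed.

Lemma near_best_approximation x : ~ Z x ->
  exists z0, Z z0 /\ 0 < vnorm (vsub x z0) /\
    forall z, Z z -> vnorm (vsub x z0) <= 2 * vnorm (vsub x z).
Proof.
  intros Hx. destruct (closed_subspace_dist_pos x Hx) as [d [Pd Hd]].
  set (lower := fun r => forall z, Z z -> r <= vnorm (vsub x z)).
  assert (Hb : bound lower).
  { exists (vnorm x). intros r Hr. pose proof (Hr vzero (proj1 HZ)). rewrite vsub_0_r in H. auto. }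
  destruct (completeness lower Hb (ex_intro _ d Hd)) as [dist [Hub Hlub]].
  assert (Hd_dist : d <= dist) by (apply Hub; exact Hd).
  assert (Hdist : lower dist) by (intros z Hz; apply Hlub; intros r Hr; apply Hr; auto).
  assert (Hz0 : exists z0, Z z0 /\ vnorm (vsub x z0) < 2 * dist).
  { apply NNPP. intros Hn. enough (lower (2 * dist)) by (apply Hub in H; lra).
    intros z Hz. apply Rnot_lt_le. intros Hlt. apply Hn. exists z. auto. }
  destruct Hz0 as [z0 [Hz0 Hlt]]. exists z0. split; [| split]; auto.
  - apply (Rlt_le_trans _ d); auto.
  - intros z Hz. specialize (Hdist z Hz). lra.
Qed.

Lemma riesz_lemma x : ~ Z x ->
  exists z0, Z z0 /\ 0 < vnorm (vsub x z0) /\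
    forall z, Z z -> 1 / 2 <= vnorm (vsub (normalize (vsub x z0)) z).
Proof.
  intros Hx. destruct (near_best_approximation x Hx) as [z0 [Hz0 [Pt Hbest]]].
  exists z0. split; [| split]; auto. intros z Hz. set (t := vnorm (vsub x z0)) in *.
  assert (Hrescale : vsub (normalize (vsub x z0)) z =
                     vscal (RtoC (/ t)) (vsub x (vadd z0 (vscal (RtoC t) z)))).
  { unfold normalize. rewrite vsub_add_r, (vscal_sub _ (vsub x z0)), vscal_RtoC_mul.
    fold t. rewrite Rinv_l, vscal_1 by lra. reflexivity. }
  rewrite Hrescale, norm_scal_RtoC, Rabs_right by (left; apply Rinv_0_lt_compat; lra).
  pose proof (Hbest _ (subspace_add Z HZ _ _ Hz0 (subspace_scal Z HZ (RtoC t) _ Hz))).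
  apply (Rmult_le_reg_l t); [lra |]. rewrite <- Rmult_assoc, Rinv_r by lra. lra.
Qed.

Lemma riesz_lemma_in (Z' : V -> Prop) : closed_subspace Z' -> (forall z, Z z -> Z' z) ->
  ~ (forall x, Z' x -> Z x) ->
  exists u, Z' u /\ vnorm u <= 1 /\ forall z, Z z -> 1 / 2 <= vnorm (vsub u z).
Proof.
  intros HZ' Hsub Hnot. apply not_all_ex_not in Hnot. destruct Hnot as [x Hx].
  apply imply_to_and in Hx. destruct Hx as [Hx' Hx].
  destruct (riesz_lemma x Hx) as [z0 [Hz0 [Pt Hfar]]]. exists (normalize (vsub x z0)).
  split; [| split]; auto.
  - unfold normalize. apply (subspace_scal Z' HZ'), (subspace_sub Z' HZ'); auto.
  - rewrite norm_normalize; lra.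
Qed.

End RieszLemma.

Lemma not_bounded_below_unit_seq {A B : Banach} (f : A -> B) (M : A -> Prop) :
  linear f -> closed_subspace M ->
  ~ (exists c, forall y, M y -> vnorm y <= c * vnorm (f y)) ->
  exists u, forall n, M (u n) /\ vnorm (u n) = 1 /\ vnorm (f (u n)) <= / INR (S n).
Proof.
  intros Hf HM Hn.
  enough (Hu : forall n, exists y, M y /\ vnorm y = 1 /\ vnorm (f y) <= / INR (S n))
    by (apply choice in Hu; exact Hu).
  intros n. pose proof (lt_0_INR (S n) ltac:(lia)) as Pn.
  assert (Hbad : exists y, M y /\ INR (S n) * vnorm (f y) < vnorm y).
  { apply NNPP. intros Hm. apply Hn. exists (INR (S n)). intros y Hy.
    apply Rnot_lt_le. intros Hlt. apply Hm. eauto. }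
  destruct Hbad as [y [Hy Hlt]]. pose proof (norm_ge0 (f y)).
  assert (Py : 0 < vnorm y) by nra.
  exists (normalize y). split; [| split].
  - apply (subspace_scal M HM); auto.
  - apply norm_normalize; auto.
  - rewrite norm_linear_normalize by auto. apply div_le_inv_of_mul_lt; auto.
Qed.

Lemma compact_op_bounded {A B : Banach} (K : A -> B) : compact_op K -> bounded_op K.
Proof. intros [H _]; exact H. Qed.

Section CompactOperators.
Context {A B D : Banach}.

Lemma compact_op_zero : compact_op (fun _ : A => @vzero B).
Proof.
  split; [split; [split |] |].
  - intros; rewrite vadd_0_r; reflexivity.
  - intros; rewrite vscal_vzero; reflexivity.
  - exists 0. intros; rewrite norm_zero; lra.
  - intros u _. exists (fun n => n), vzero. split; [intros; lia | apply conv_const].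
Qed.

Lemma compact_op_add (K L : A -> B) :
  compact_op K -> compact_op L -> compact_op (fun x => vadd (K x) (L x)).
Proof.
  intros HK HL. split; [apply bounded_op_add; apply compact_op_bounded; auto |].
  intros u Hu. destruct (proj2 HK u Hu) as [phi [l [Hphi Hl]]].
  destruct (proj2 HL (fun n => u (phi n))) as [psi [m [Hpsi Hm]]].
  { destruct Hu as [b Hb]. exists b. auto. }
  exists (fun n => phi (psi n)), (vadd l m). split.
  - intros n. enough (forall i j, (i < j)%nat -> (phi i < phi j)%nat) by auto.
    intros i j Hij. induction Hij; [apply Hphi | specialize (Hphi m0); lia].
  - apply (conv_add (fun n => K (u (phi (psi n))))); auto.
    apply (conv_subseq (fun n => K (u (phi n)))); auto.
Qed.

Lemma compact_op_comp_bounded (K : B -> D) (L : A -> B) :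
  compact_op K -> bounded_op L -> compact_op (fun x => K (L x)).
Proof.
  intros HK HL. split; [apply bounded_op_comp; [apply compact_op_bounded |]; auto |].
  intros u [b Hb]. destruct (bounded_op_pos L HL) as [c [Pc Bc]].
  apply (proj2 HK (fun n => L (u n))). exists (c * b). intros n.
  eapply Rle_trans; [apply Bc | apply Rmult_le_compat_l; [lra | apply Hb]].
Qed.

Lemma bounded_comp_compact_op (L : B -> D) (K : A -> B) :
  bounded_op L -> compact_op K -> compact_op (fun x => L (K x)).
Proof.
  intros HL HK. split; [apply bounded_op_comp; [| apply compact_op_bounded]; auto |].
  intros u Hu. destruct (proj2 HK u Hu) as [phi [l [Hphi Hl]]].
  exists phi, (L l). split; auto. apply (conv_bounded_op L (fun n => K (u (phi n)))); auto.
Qed.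

Lemma compact_op_not_separated (K : A -> B) (u : nat -> A) : compact_op K ->
  (forall n, vnorm (u n) <= 1) ->
  ~ (forall m n, (m < n)%nat -> 1 / 2 <= vnorm (vsub (K (u m)) (K (u n)))).
Proof.
  intros HK Hu Hsep. destruct (proj2 HK u) as [phi [l [Hphi Hl]]]; [exists 1; auto |].
  destruct (conv_cauchy _ _ Hl (1 / 2)) as [N HN]; [lra |].
  specialize (HN N (S N) (le_n _) (le_S _ _ (le_n _))).
  specialize (Hsep (phi N) (phi (S N)) (Hphi N)). lra.
Qed.

End CompactOperators.

Definition id_sub {V : Banach} (K : V -> V) (x : V) : V := vsub x (K x).

Section IdMinusCompact.
Context {V : Banach}.
Variable K : V -> V.
Hypothesis HK : compact_op K.

Lemma bounded_op_id_sub : bounded_op (id_sub K).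
Proof.
  apply (bounded_op_sub (fun x => x)); [apply bounded_op_id | apply compact_op_bounded; auto].
Qed.

Lemma id_sub_almost_ker_subseq (u : nat -> V) :
  (exists b, forall n, vnorm (u n) <= b) -> conv (fun n => id_sub K (u n)) vzero ->
  exists phi v, (forall n, (phi n < phi (S n))%nat) /\ conv (fun n => u (phi n)) v /\
    id_sub K v = vzero.
Proof.
  intros Hu H0. destruct (proj2 HK u Hu) as [phi [l [Hphi Hl]]].
  assert (Hc : conv (fun n => u (phi n)) l).
  { apply (conv_ext (fun n => vadd (id_sub K (u (phi n))) (K (u (phi n))))).
    - intros; apply vsub_add_cancel.
    - rewrite <- (add_zero l). apply conv_add; auto.
      apply (conv_subseq (fun n => id_sub K (u n))); auto. }
  exists phi, l. split; [| split]; auto.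
  pose proof (conv_bounded_op K _ _ (compact_op_bounded K HK) Hc) as HKl.
  unfold id_sub. rewrite (conv_unique _ _ _ HKl Hl). apply vsub_diag.
Qed.

Lemma id_sub_bounded_below_mod_ker : exists c, forall x, exists z,
  id_sub K z = vzero /\ vnorm (vsub x z) <= c * vnorm (id_sub K x).
Proof.
  apply NNPP. intros Hn.
  assert (Hu : forall n, exists u, vnorm u <= 1 /\ vnorm (id_sub K u) <= / INR (S n) /\
     forall z, id_sub K z = vzero -> 1 / 2 <= vnorm (vsub u z)).
  { intros n. pose proof (lt_0_INR (S n) ltac:(lia)) as Pn.
    assert (Hbad : exists x, forall z, id_sub K z = vzero ->
              INR (S n) * vnorm (id_sub K x) < vnorm (vsub x z)).
    { apply NNPP. intros Hm. apply Hn. exists (INR (S n)). intros x. apply NNPP. intros Hk.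
      apply Hm. exists x. intros z Hz. apply Rnot_le_lt. intros Hle. apply Hk. eauto. }
    destruct Hbad as [x Hx].
    assert (Hnx : id_sub K x <> vzero).
    { intros E. specialize (Hx x E). rewrite vsub_diag, norm_zero, E, norm_zero in Hx. lra. }
    destruct (riesz_lemma _ (ker_closed _ bounded_op_id_sub) x Hnx) as [z0 [Hz0 [Pt Hfar]]].
    exists (normalize (vsub x z0)). split; [| split]; auto.
    - rewrite norm_normalize; lra.
    - rewrite norm_linear_normalize, linear_sub, Hz0, vsub_0_r by (apply bounded_op_id_sub || auto).
      apply div_le_inv_of_mul_lt; auto. }
  apply choice in Hu. destruct Hu as [u Hu].
  destruct (id_sub_almost_ker_subseq u) as [phi [v [_ [Hc Hv]]]].
  - exists 1. intros; apply Hu.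
  - apply conv_rate. intros n. rewrite vsub_0_r. apply Hu.
  - destruct (Hc (1 / 2)) as [N HN]; [lra |]. specialize (HN N (le_n _)).
    pose proof (proj2 (proj2 (Hu (phi N))) v Hv). lra.
Qed.

Lemma id_sub_bounded_preimage : exists c, forall y, (exists x, y = id_sub K x) ->
  exists w, id_sub K w = y /\ vnorm w <= c * vnorm y.
Proof.
  destruct id_sub_bounded_below_mod_ker as [c Hc]. exists c. intros y [x ->].
  destruct (Hc x) as [z [Hz Hxz]]. exists (vsub x z). split; auto.
  rewrite (linear_sub _ (proj1 bounded_op_id_sub)), Hz. apply vsub_0_r.
Qed.

Lemma range_id_sub_closed : closed_subspace (fun y => exists x, y = id_sub K x).
Proof.
  pose proof bounded_op_id_sub as HW. split; [| split; [| split]].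
  - exists vzero. rewrite linear_zero; auto. apply HW.
  - intros y1 y2 [x1 ->] [x2 ->]. exists (vadd x1 x2). rewrite linear_add; auto. apply HW.
  - intros c y [x ->]. exists (vscal c x). rewrite linear_scal; auto. apply HW.
  - intros u l Hu Hl. destruct id_sub_bounded_preimage as [c Hc].
    destruct (choice _ (fun n => Hc (u n) (Hu n))) as [w Hw].
    destruct (conv_bounded u l Hl) as [b Hb].
    destruct (proj2 HK w) as [phi [m [Hphi Hm]]].
    { exists (Rabs c * b). intros n. eapply Rle_trans; [apply (proj2 (Hw n)) |].
      pose proof (Hb n). pose proof (norm_ge0 (u n)). pose proof (Rle_abs c).
      pose proof (Rabs_pos c). nra. }
    assert (Hconv : conv (fun n => w (phi n)) (vadd l m)).
    { apply (conv_ext (fun n => vadd (u (phi n)) (K (w (phi n))))).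
      - intros n. rewrite <- (proj1 (Hw (phi n))). apply vsub_add_cancel.
      - apply conv_add; auto. apply conv_subseq; auto. }
    exists (vadd l m). apply (conv_unique (fun n => u (phi n))); [apply conv_subseq; auto |].
    apply (conv_ext (fun n => id_sub K (w (phi n)))); [intros; apply Hw |].
    apply conv_bounded_op; auto.
Qed.

Lemma id_sub_bounded_below_on (M : V -> Prop) : closed_subspace M ->
  (forall y, M y -> id_sub K y = vzero -> y = vzero) ->
  exists c, forall y, M y -> vnorm y <= c * vnorm (id_sub K y).
Proof.
  intros HM Hinj. apply NNPP. intros Hn.
  destruct (not_bounded_below_unit_seq _ M (proj1 bounded_op_id_sub) HM Hn) as [u Hu].
  destruct (id_sub_almost_ker_subseq u) as [phi [v [_ [Hc Hv]]]].
  - exists 1. intros n. rewrite (proj1 (proj2 (Hu n))). lra.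
  - apply conv_rate. intros n. rewrite vsub_0_r. apply Hu.
  - assert (Mv : M v)
      by (apply (subspace_closed M HM (fun n => u (phi n))); auto; intros; apply Hu).
    assert (Nv : vnorm v = 1) by (apply (conv_norm_const _ _ _ Hc); intros; apply Hu).
    rewrite (Hinj v Mv Hv), norm_zero in Nv. lra.
Qed.

Lemma sub_apply_id_sub (a b : V) : vsub (K a) (K b) = vsub a (vadd (id_sub K a) (K b)).
Proof. unfold id_sub. rewrite vsub_add_r, vsub_sub_r. reflexivity. Qed.

Lemma apply_eq_sub_id_sub (b : V) : K b = vsub b (id_sub K b).
Proof. unfold id_sub. rewrite vsub_sub_r. reflexivity. Qed.

Variable Z : nat -> V -> Prop.
Hypothesis HZ : forall n, closed_subspace (Z n).

Lemma increasing_chain_stops :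
  (forall n x, Z n x -> Z (S n) x) -> (forall n x, Z (S n) x -> Z n (id_sub K x)) ->
  exists n, forall x, Z (S n) x -> Z n x.
Proof.
  intros Hincr HW. apply NNPP. intros Hn.
  assert (Hmono : forall m n x, (m <= n)%nat -> Z m x -> Z n x)
    by (intros m n x Hle; induction Hle; auto).
  assert (Hu : forall n, exists u, Z (S n) u /\ vnorm u <= 1 /\
                 forall z, Z n z -> 1 / 2 <= vnorm (vsub u z)).
  { intros n. apply riesz_lemma_in; auto. intros Hs. apply Hn. eauto. }
  apply choice in Hu. destruct Hu as [u Hu].
  apply (compact_op_not_separated K u HK); [intros; apply Hu |]. intros m n Hmn.
  rewrite norm_sub_sym, sub_apply_id_sub. apply Hu.
  apply (subspace_add _ (HZ n)); [apply HW, Hu |].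
  rewrite apply_eq_sub_id_sub. apply (subspace_sub _ (HZ n)).
  - apply (Hmono (S m)); [lia | apply Hu].
  - apply (Hmono m); [lia | apply HW, Hu].
Qed.

Lemma decreasing_chain_stops :
  (forall n x, Z (S n) x -> Z n x) -> (forall n x, Z n x -> Z (S n) (id_sub K x)) ->
  exists n, forall x, Z n x -> Z (S n) x.
Proof.
  intros Hdecr HW. apply NNPP. intros Hn.
  assert (Hmono : forall m n x, (m <= n)%nat -> Z n x -> Z m x)
    by (intros m n x Hle; induction Hle; auto).
  assert (Hu : forall n, exists u, Z n u /\ vnorm u <= 1 /\
                 forall z, Z (S n) z -> 1 / 2 <= vnorm (vsub u z)).
  { intros n. apply riesz_lemma_in; auto. intros Hs. apply Hn. eauto. }
  apply choice in Hu. destruct Hu as [u Hu].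
  apply (compact_op_not_separated K u HK); [intros; apply Hu |]. intros m n Hmn.
  rewrite sub_apply_id_sub. apply Hu.
  apply (subspace_add _ (HZ (S m))); [apply HW, Hu |].
  rewrite apply_eq_sub_id_sub. apply (subspace_sub _ (HZ (S m))).
  - apply (Hmono (S m) n); [lia | apply Hu].
  - apply (Hmono (S m) (S n)); [lia | apply HW, Hu].
Qed.

End IdMinusCompact.

(* Entries of [greedy_prefix a0 next n] at indices [>= n] are padding. *)
Fixpoint greedy_prefix {A : Type} (a0 : A) (next : nat -> (nat -> A) -> A) (n : nat) : nat -> A :=
  match n with
  | O => fun _ => a0
  | S m => fun i =>
      if Nat.ltb i m then greedy_prefix a0 next m i else next m (greedy_prefix a0 next m)
  end.

Lemma greedy_prefix_stable {A : Type} (a0 : A) next j i : (i < j)%nat ->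
  greedy_prefix a0 next j i = greedy_prefix a0 next (S i) i.
Proof.
  induction j as [| j IH]; intros Hi; [lia |]. simpl. destruct (Nat.ltb i j) eqn:E.
  - apply Nat.ltb_lt in E. rewrite IH by auto. simpl. rewrite Nat.ltb_irrefl. reflexivity.
  - apply Nat.ltb_ge in E. replace i with j by lia. simpl. rewrite Nat.ltb_irrefl. reflexivity.
Qed.

Lemma greedy_sequence {A : Type} (a0 : A) (P : A -> Prop) (Rel : A -> A -> Prop) :
  (forall n (e : nat -> A), (forall i, (i < n)%nat -> P (e i)) ->
     exists x, P x /\ forall i, (i < n)%nat -> Rel (e i) x) ->
  exists u : nat -> A, forall n, P (u n) /\ forall i, (i < n)%nat -> Rel (u i) (u n).
Proof.
  intros Hext.
  assert (Hnext : forall p : nat * (nat -> A), exists x,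
            (forall i, (i < fst p)%nat -> P (snd p i)) ->
            P x /\ forall i, (i < fst p)%nat -> Rel (snd p i) x).
  { intros [n e]. destruct (classic (forall i, (i < n)%nat -> P (e i))) as [Hp | Hp].
    - destruct (Hext n e Hp) as [x Hx]. exists x. auto.
    - exists a0. intros; contradiction. }
  apply choice in Hnext. destruct Hnext as [next Hnext].
  set (pre := greedy_prefix a0 (fun m e => next (m, e))).
  exists (fun i => pre (S i) i).
  assert (Hlast : forall j, pre (S j) j = next (j, pre j))
    by (intros j; unfold pre; simpl; rewrite Nat.ltb_irrefl; reflexivity).
  assert (Hpre : forall j i, (i < j)%nat -> pre j i = pre (S i) i)
    by (intros; apply greedy_prefix_stable; auto).
  assert (HP : forall j i, (i < j)%nat -> P (pre (S i) i)).
  { induction j as [| j IH]; intros i Hi; [lia |].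
    rewrite Hlast. apply (Hnext (i, pre i)). simpl. intros k Hk.
    rewrite Hpre by auto. apply IH. lia. }
  intros n. rewrite Hlast. destruct (Hnext (n, pre n)) as [Pn Rn].
  { simpl. intros i Hi. rewrite Hpre by auto. apply (HP n); auto. }
  split; auto. intros i Hi. rewrite <- (Hpre n i Hi). apply Rn. auto.
Qed.

Lemma compact_fixed_half_net {V : Banach} (K : V -> V) (N : V -> Prop) :
  compact_op K -> (forall x, N x -> K x = x) ->
  exists n e, (forall i, (i < n)%nat -> N (e i)) /\
    forall x, N x -> vnorm x <= 1 -> exists i, (i < n)%nat /\ vnorm (vsub x (e i)) <= 1 / 2.
Proof.
  intros HK Hfix. apply NNPP. intros Hnonet.
  destruct (greedy_sequence vzero (fun x => N x /\ vnorm x <= 1)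
              (fun a b => 1 / 2 < vnorm (vsub b a))) as [u Hu].
  { intros n e He. apply NNPP. intros Hnox. apply Hnonet. exists n, e. split; [apply He |].
    intros x Hx Hx1. apply NNPP. intros Hfar. apply Hnox. exists x. split; auto.
    intros i Hi. apply Rnot_le_lt. intros Hle. apply Hfar. eauto. }
  apply (compact_op_not_separated K u HK); [apply Hu |]. intros m n Hmn.
  rewrite !Hfix by apply Hu. rewrite norm_sub_sym. left. apply Hu; auto.
Qed.

Section LinearCombinations.
Context {V : Banach}.
Implicit Type e : nat -> V.

Lemma lin_comb_ext n (c d : nat -> C) e :
  (forall i, (i < n)%nat -> c i = d i) -> lin_comb n c e = lin_comb n d e.
Proof. induction n; intros H; simpl; auto. rewrite IHn, H; auto. Qed.

Lemma lin_comb_zero n e : lin_comb n (fun _ => RtoC 0) e = vzero.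
Proof. induction n; simpl; auto. rewrite IHn, vscal_RtoC_0, add_zero. reflexivity. Qed.

Lemma vscal_lin_comb n k (c : nat -> C) e :
  vscal k (lin_comb n c e) = lin_comb n (fun i => Cmul k (c i)) e.
Proof.
  induction n; simpl; [apply vscal_vzero |].
  rewrite scal_distr_v, IHn, scal_assoc. reflexivity.
Qed.

Lemma lin_comb_add_coef n j t (c : nat -> R) e : (j < n)%nat ->
  lin_comb n (fun i => RtoC (c i + if Nat.eqb j i then t else 0)) e =
  vadd (lin_comb n (fun i => RtoC (c i)) e) (vscal (RtoC t) (e j)).
Proof.
  induction n as [| n IH]; intros Hj; [lia |]. simpl. destruct (Nat.eq_dec j n) as [-> | Hne].
  - rewrite Nat.eqb_refl, (lin_comb_ext n _ (fun i => RtoC (c i))).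
    + rewrite <- Cadd_RtoC, scal_distr_s, <- !add_assoc. reflexivity.
    + intros i Hi. replace (Nat.eqb n i) with false by (symmetry; apply Nat.eqb_neq; lia).
      rewrite Rplus_0_r. reflexivity.
  - rewrite IH by lia. replace (Nat.eqb j n) with false by (symmetry; apply Nat.eqb_neq; auto).
    rewrite Rplus_0_r, <- !add_assoc. f_equal. apply add_comm.
Qed.

Lemma conv_lin_comb n (a : nat -> nat -> R) (b : nat -> R) e :
  (forall i, (i < n)%nat -> Un_cv (fun m => a m i) (b i)) ->
  conv (fun m => lin_comb n (fun i => RtoC (a m i)) e) (lin_comb n (fun i => RtoC (b i)) e).
Proof.
  induction n; intros H; simpl; [apply conv_const |].
  apply conv_add; [apply IHn; auto | apply conv_scal_RtoC; auto].
Qed.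

End LinearCombinations.

Fixpoint partial_sum (t : nat -> R) (m : nat) : R :=
  match m with O => 0 | S m' => partial_sum t m' + t m' end.

Lemma partial_sum_dyadic_cv (t : nat -> R) :
  (forall k, 0 <= t k <= (/ 2) ^ k) -> exists l, Un_cv (partial_sum t) l.
Proof.
  intros Ht. assert (Hpow : forall k, 0 <= (/ 2) ^ k) by (intros; apply pow_le; lra).
  assert (Hb : forall m, partial_sum t m <= 2 - 2 * (/ 2) ^ m).
  { induction m as [| m IH]; simpl; [lra |]. specialize (Ht m). lra. }
  destruct (growing_cv (partial_sum t)) as [l Hl]; [| | exists l; exact Hl].
  - intros m. simpl. specialize (Ht m). lra.
  - exists 2. intros y [m ->]. specialize (Hb m). specialize (Hpow m). lra.
Qed.

Section DyadicExpansion.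
Context {V : Banach}.
Variable N : V -> Prop.
Hypothesis HN : closed_subspace N.
Variable n : nat.
Variable e : nat -> V.
Variable digit : V -> nat.
Hypothesis Hdigit : forall y, N y -> vnorm y <= 1 ->
  (digit y < n)%nat /\ N (e (digit y)) /\ vnorm (vsub y (e (digit y))) <= 1 / 2.

Definition dyadic_remainder (x : V) (m : nat) : V :=
  Nat.iter m (fun y => vscal (RtoC 2) (vsub y (e (digit y)))) x.

Definition dyadic_coef (x : V) (i k : nat) : R :=
  if Nat.eqb (digit (dyadic_remainder x k)) i then (/ 2) ^ k else 0.

Variable x : V.
Hypothesis Hx : N x.
Hypothesis Hx1 : vnorm x <= 1.

Lemma dyadic_remainder_in_ball m : N (dyadic_remainder x m) /\ vnorm (dyadic_remainder x m) <= 1.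
Proof.
  induction m as [| m [Hr Hr1]]; [split; auto |].
  destruct (Hdigit _ Hr Hr1) as [_ [He Hd]]. simpl. split.
  - apply (subspace_scal N HN), (subspace_sub N HN); auto.
  - rewrite norm_scal_RtoC, Rabs_right by lra. lra.
Qed.

Lemma dyadic_partial_expansion m :
  x = vadd (lin_comb n (fun i => RtoC (partial_sum (dyadic_coef x i) m)) e)
           (vscal (RtoC ((/ 2) ^ m)) (dyadic_remainder x m)).
Proof.
  induction m as [| m IH].
  - simpl. rewrite lin_comb_zero, vscal_1, add_zero. reflexivity.
  - rewrite IH at 1. simpl partial_sum. unfold dyadic_coef.
    destruct (dyadic_remainder_in_ball m) as [Hr Hr1]. destruct (Hdigit _ Hr Hr1) as [Hlt _].
    rewrite (lin_comb_add_coef n _ _ (fun i => partial_sum (dyadic_coef x i) m) e Hlt).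
    simpl dyadic_remainder. rewrite vscal_RtoC_mul.
    replace ((/ 2) ^ S m * 2) with ((/ 2) ^ m) by (simpl; field).
    rewrite vscal_sub, <- add_assoc. f_equal. rewrite add_comm, vsub_add_cancel. reflexivity.
Qed.

Lemma dyadic_expansion : exists c : nat -> R, x = lin_comb n (fun i => RtoC (c i)) e.
Proof.
  assert (Hcv : forall i, exists l, Un_cv (partial_sum (dyadic_coef x i)) l).
  { intros i. apply partial_sum_dyadic_cv. intros k. unfold dyadic_coef.
    pose proof (pow_le (/ 2) k ltac:(lra)). destruct (Nat.eqb _ _); lra. }
  apply choice in Hcv. destruct Hcv as [c Hc]. exists c.
  apply (conv_unique (fun m => lin_comb n (fun i => RtoC (partial_sum (dyadic_coef x i) m)) e)).
  - apply (conv_ext (fun m => vsub x (vscal (RtoC ((/ 2) ^ m)) (dyadic_remainder x m)))).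
    { intros m. rewrite (dyadic_partial_expansion m) at 1. apply vadd_sub_cancel. }
    assert (Hrem : conv (fun m => vscal (RtoC ((/ 2) ^ m)) (dyadic_remainder x m)) vzero).
    { intros eps Heps.
      destruct (pow_lt_1_zero (/ 2) ltac:(rewrite Rabs_right; lra) eps Heps) as [M HM].
      exists M. intros m Hm. rewrite vsub_0_r, norm_scal_RtoC. specialize (HM m Hm).
      destruct (dyadic_remainder_in_ball m) as [_ Hr1].
      pose proof (Rabs_pos ((/ 2) ^ m)). pose proof (norm_ge0 (dyadic_remainder x m)). nra. }
    pose proof (conv_sub _ _ x vzero (conv_const x) Hrem) as H. rewrite vsub_0_r in H. exact H.
  - apply conv_lin_comb. intros; apply Hc.
Qed.

End DyadicExpansion.

Lemma compact_fixed_finite_dim {V : Banach} (K : V -> V) (N : V -> Prop) :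
  compact_op K -> closed_subspace N -> (forall x, N x -> K x = x) ->
  exists n (e : nat -> V), forall x, N x -> exists c, x = lin_comb n c e.
Proof.
  intros HK HN Hfix. destruct (compact_fixed_half_net K N HK Hfix) as [n [e [He Hnet]]].
  assert (Hdigit : forall y, exists i, N y -> vnorm y <= 1 ->
            (i < n)%nat /\ N (e i) /\ vnorm (vsub y (e i)) <= 1 / 2).
  { intros y. destruct (classic (N y /\ vnorm y <= 1)) as [[Hy Hy1] | Hy].
    - destruct (Hnet y Hy Hy1) as [i [Hi Hd]]. exists i. auto.
    - exists O. intros; tauto. }
  apply choice in Hdigit. destruct Hdigit as [digit Hdigit].
  exists n, e. intros x Hx. set (s := vnorm x + 1). pose proof (norm_ge0 x).
  destruct (dyadic_expansion N HN n e digit Hdigit (vscal (RtoC (/ s)) x)) as [c Hc].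
  - apply (subspace_scal N HN); auto.
  - rewrite norm_scal_RtoC, Rabs_right by (left; apply Rinv_0_lt_compat; unfold s; lra).
    apply (Rmult_le_reg_l s); [unfold s; lra |].
    rewrite <- Rmult_assoc, Rinv_r by (unfold s; lra). unfold s; lra.
  - exists (fun i => Cmul (RtoC s) (RtoC (c i))).
    rewrite <- vscal_lin_comb, <- Hc, vscal_RtoC_mul, Rinv_r, vscal_1 by (unfold s; lra).
    reflexivity.
Qed.

Definition id_sub_pow {V : Banach} (K : V -> V) (n : nat) : V -> V := Nat.iter n (id_sub K).

Lemma closed_subspace_ext {V : Banach} (P Q : V -> Prop) :
  (forall y, P y <-> Q y) -> closed_subspace P -> closed_subspace Q.
Proof.
  intros E [H0 [Hadd [Hscal Hcl]]]. split; [| split; [| split]].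
  - apply E; auto.
  - intros x y Hx Hy. apply E, Hadd; apply E; auto.
  - intros c x Hx. apply E, Hscal, E; auto.
  - intros u l Hu Hl. apply E, (Hcl u); auto. intros; apply E; auto.
Qed.

Section PowersOfIdMinusCompact.
Context {V : Banach}.
Variable K : V -> V.
Hypothesis HK : compact_op K.

Lemma id_sub_pow_compact_form n :
  exists Kn, compact_op Kn /\ forall y, id_sub_pow K n y = id_sub Kn y.
Proof.
  induction n as [| n [Kn [HKn Hn]]].
  - exists (fun _ => vzero). split; [apply compact_op_zero |].
    intros y. unfold id_sub. rewrite vsub_0_r. reflexivity.
  - exists (fun y => vadd (Kn y) (K (id_sub Kn y))). split.
    + apply (compact_op_add Kn (fun y => K (id_sub Kn y))); auto.
      apply (compact_op_comp_bounded K (id_sub Kn)); auto. apply bounded_op_id_sub; auto.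
    + intros y. simpl. fold (id_sub_pow K n y). rewrite Hn. unfold id_sub at 3.
      rewrite vsub_add_r. reflexivity.
Qed.

Lemma bounded_op_id_sub_pow n : bounded_op (id_sub_pow K n).
Proof.
  induction n as [| n IH]; [apply bounded_op_id |].
  apply (bounded_op_comp (id_sub K) (id_sub_pow K n)); auto. apply bounded_op_id_sub; auto.
Qed.

Lemma id_sub_pow_add a b y : id_sub_pow K (a + b) y = id_sub_pow K a (id_sub_pow K b y).
Proof. apply Nat.iter_add. Qed.

Lemma id_sub_pow_S_r n y : id_sub_pow K (S n) y = id_sub_pow K n (id_sub K y).
Proof. apply Nat.iter_succ_r. Qed.

Lemma id_sub_pow_zero n : id_sub_pow K n vzero = vzero.
Proof. apply linear_zero, bounded_op_id_sub_pow. Qed.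

Lemma ker_id_sub_pow_closed n : closed_subspace (fun x => id_sub_pow K n x = vzero).
Proof. apply ker_closed, bounded_op_id_sub_pow. Qed.

Lemma range_id_sub_pow_closed n : closed_subspace (fun y => exists x, y = id_sub_pow K n x).
Proof.
  destruct (id_sub_pow_compact_form n) as [Kn [HKn Hn]].
  apply (closed_subspace_ext (fun y => exists x, y = id_sub Kn x)).
  - intros y. split; intros [x ->]; exists x; auto.
  - apply range_id_sub_closed; auto.
Qed.

Lemma ker_id_sub_pow_finite_dim n :
  exists m (e : nat -> V), forall x, id_sub_pow K n x = vzero -> exists c, x = lin_comb m c e.
Proof.
  destruct (id_sub_pow_compact_form n) as [Kn [HKn Hn]].
  apply (compact_fixed_finite_dim Kn); auto.
  - apply ker_id_sub_pow_closed.
  - intros x Hx. rewrite Hn in Hx. symmetry. apply vsub_eq0, Hx.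
Qed.

Lemma ker_id_sub_pow_stationary : exists p, forall d x,
  id_sub_pow K (p + d) x = vzero -> id_sub_pow K p x = vzero.
Proof.
  destruct (increasing_chain_stops K HK (fun n x => id_sub_pow K n x = vzero)) as [p Hp].
  - apply ker_id_sub_pow_closed.
  - intros n x Hx. simpl. fold (id_sub_pow K n x). rewrite Hx.
    apply linear_zero, bounded_op_id_sub, HK.
  - intros n x Hx. rewrite <- id_sub_pow_S_r. exact Hx.
  - exists p. induction d as [| d IH]; intros x Hx; [rewrite Nat.add_0_r in Hx; exact Hx |].
    apply Hp. rewrite id_sub_pow_S_r. apply IH.
    rewrite <- id_sub_pow_S_r, <- Nat.add_succ_r. exact Hx.
Qed.

Lemma range_id_sub_pow_stationary : exists q, forall d y,
  (exists x, y = id_sub_pow K q x) -> exists x, y = id_sub_pow K (q + d) x.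
Proof.
  destruct (decreasing_chain_stops K HK (fun n y => exists x, y = id_sub_pow K n x)) as [q Hq].
  - apply range_id_sub_pow_closed.
  - intros n y [x ->]. exists (id_sub K x). apply id_sub_pow_S_r.
  - intros n y [x ->]. exists x. reflexivity.
  - exists q. induction d as [| d IH]; intros y Hy; [rewrite Nat.add_0_r; exact Hy |].
    destruct (IH y Hy) as [x ->]. rewrite Nat.add_comm, id_sub_pow_add.
    destruct (Hq (id_sub_pow K q x)) as [w Hw]; [eauto |].
    exists w. rewrite Hw, <- id_sub_pow_add. f_equal. lia.
Qed.

End PowersOfIdMinusCompact.

Section RieszDecomposition.
Context {V : Banach}.
Variable K : V -> V.
Hypothesis HK : compact_op K.
(* [p] and [q] bound the ascent and the descent of [I - K]. *)
Variables p q : nat.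
Hypothesis Hp : forall d x, id_sub_pow K (p + d) x = vzero -> id_sub_pow K p x = vzero.
Hypothesis Hq : forall d y,
  (exists x, y = id_sub_pow K q x) -> exists x, y = id_sub_pow K (q + d) x.

Let W := id_sub_pow K (p + q).

Lemma riesz_range_complement y : exists z, W (vsub y (W z)) = vzero.
Proof.
  destruct (Hq (p + (p + q)) (W y)) as [z Hz].
  { exists (id_sub_pow K p y). unfold W. rewrite Nat.add_comm. apply id_sub_pow_add. }
  exists z. unfold W. rewrite linear_sub by apply bounded_op_id_sub_pow, HK.
  rewrite <- id_sub_pow_add. fold W. rewrite Hz. replace (q + (p + (p + q)))%nat with
    (p + q + (p + q))%nat by lia. apply vsub_diag.
Qed.

Lemma riesz_range_finite_codim : finite_codim (fun y => exists x, y = W x).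
Proof.
  destruct (ker_id_sub_pow_finite_dim K HK (p + q)) as [n [e He]].
  exists n, e. intros y. destruct (riesz_range_complement y) as [z Hz].
  destruct (He _ Hz) as [c Hc]. exists c, (W z). split; eauto.
  rewrite <- Hc, add_comm. symmetry. apply vsub_add_cancel.
Qed.

Lemma riesz_range_ker_trivial y :
  (exists x, y = W x) -> id_sub K y = vzero -> y = vzero.
Proof.
  intros [z ->] Hz. unfold W.
  assert (Hpz : id_sub_pow K p z = vzero).
  { apply (Hp (S q)). rewrite Nat.add_succ_r. exact Hz. }
  rewrite Nat.add_comm, id_sub_pow_add, Hpz. apply id_sub_pow_zero, HK.
Qed.

End RieszDecomposition.

Theorem riesz_decomposition {V : Banach} (K : V -> V) : compact_op K ->
  exists M : V -> Prop, closed_subspace M /\ finite_codim M /\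
    exists c, forall y, M y -> vnorm y <= c * vnorm (id_sub K y).
Proof.
  intros HK. destruct (ker_id_sub_pow_stationary K HK) as [p Hp].
  destruct (range_id_sub_pow_stationary K HK) as [q Hq].
  exists (fun y => exists x, y = id_sub_pow K (p + q) x). split; [| split].
  - apply range_id_sub_pow_closed; auto.
  - apply riesz_range_finite_codim; auto.
  - apply id_sub_bounded_below_on; auto.
    + apply range_id_sub_pow_closed; auto.
    + apply (riesz_range_ker_trivial K HK p q Hp).
Qed.

Section DirectSum.
Context {A B : Banach}.

Lemma dsum_norm_fst (p : dsum A B) : vnorm (fst p) <= vnorm p.
Proof.
  destruct p as [x y]. simpl. pose proof (norm_ge0 x). pose proof (pow2_ge_0 (vnorm y)).
  rewrite <- (sqrt_pow2 (vnorm x)) at 1 by auto. apply sqrt_le_1_alt. lra.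
Qed.

Lemma dsum_norm_snd (p : dsum A B) : vnorm (snd p) <= vnorm p.
Proof.
  destruct p as [x y]. simpl. pose proof (norm_ge0 y). pose proof (pow2_ge_0 (vnorm x)).
  rewrite <- (sqrt_pow2 (vnorm y)) at 1 by auto. apply sqrt_le_1_alt. lra.
Qed.

Lemma dsum_norm_inl (x : A) : vnorm ((x, vzero) : dsum A B) = vnorm x.
Proof.
  change (sqrt (vnorm x ^ 2 + vnorm (@vzero B) ^ 2) = vnorm x).
  rewrite norm_zero. replace (vnorm x ^ 2 + 0 ^ 2) with (vnorm x ^ 2) by ring.
  apply sqrt_pow2, norm_ge0.
Qed.

Lemma dsum_norm_inr (y : B) : vnorm ((vzero, y) : dsum A B) = vnorm y.
Proof.
  change (sqrt (vnorm (@vzero A) ^ 2 + vnorm y ^ 2) = vnorm y).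
  rewrite norm_zero. replace (0 ^ 2 + vnorm y ^ 2) with (vnorm y ^ 2) by ring.
  apply sqrt_pow2, norm_ge0.
Qed.

Lemma bounded_op_inl {D : NVS} (f : dsum A B -> D) :
  bounded_op f -> bounded_op (fun x : A => f (x, vzero)).
Proof.
  intros [[Hadd Hscal] [K HK]]. split; [split |].
  - intros x y. rewrite <- Hadd. simpl. rewrite add_zero. reflexivity.
  - intros c x. rewrite <- Hscal. simpl. rewrite vscal_vzero. reflexivity.
  - exists K. intros x. rewrite <- dsum_norm_inl. apply HK.
Qed.

Lemma bounded_op_inr {D : NVS} (f : dsum A B -> D) :
  bounded_op f -> bounded_op (fun y : B => f (vzero, y)).
Proof.
  intros [[Hadd Hscal] [K HK]]. split; [split |].
  - intros x y. rewrite <- Hadd. simpl. rewrite add_zero. reflexivity.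
  - intros c x. rewrite <- Hscal. simpl. rewrite vscal_vzero. reflexivity.
  - exists K. intros y. rewrite <- dsum_norm_inr. apply HK.
Qed.

Lemma bounded_op_fst {D : Banach} (f : D -> dsum A B) :
  bounded_op f -> bounded_op (fun x => fst (f x)).
Proof.
  intros [[Hadd Hscal] [K HK]]. split; [split |].
  - intros x y. rewrite Hadd. reflexivity.
  - intros c x. rewrite Hscal. reflexivity.
  - exists K. intros x. eapply Rle_trans; [apply dsum_norm_fst | apply HK].
Qed.

Lemma bounded_op_snd {D : Banach} (f : D -> dsum A B) :
  bounded_op f -> bounded_op (fun x => snd (f x)).
Proof.
  intros [[Hadd Hscal] [K HK]]. split; [split |].
  - intros x y. rewrite Hadd. reflexivity.
  - intros c x. rewrite Hscal. reflexivity.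
  - exists K. intros x. eapply Rle_trans; [apply dsum_norm_snd | apply HK].
Qed.

End DirectSum.

(* With [G = F^-1] and [P = G (y, 0)], comparing the second components of
   [diag T P = E (S y, 0)] gives [snd P], and splitting [P = (fst P, 0) + (0, snd P)]
   inside [(y, 0) = F P] yields [y = F11 (G11 y) + F12 (E21 (S y))]. *)
Lemma equiv_after_ext_factor (X Y : Banach) (T : X -> X) (S : Y -> Y) :
  equiv_after_ext X Y T S ->
  exists (a : Y -> X) (b : X -> Y) (L : Y -> Y),
    bounded_op a /\ bounded_op b /\ bounded_op L /\ forall y, vsub y (L (S y)) = b (a y).
Proof.
  intros [X' [Y' [E [F [[HE _] [[HF [G [HG [_ HFG]]]] Heq]]]]]].
  exists (fun y => fst (G (y, vzero))), (fun x => fst (F (x, vzero))),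
         (fun y => fst (F (vzero, snd (E (y, vzero))))).
  split; [| split; [| split]].
  - apply (bounded_op_fst (fun y => G (y, vzero))), bounded_op_inl; auto.
  - apply (bounded_op_fst (fun x => F (x, vzero))), bounded_op_inl; auto.
  - apply (bounded_op_comp (fun y' => fst (F (vzero, y'))) (fun y => snd (E (y, vzero)))).
    + apply (bounded_op_fst (fun y' => F (vzero, y'))), bounded_op_inr; auto.
    + apply (bounded_op_snd (fun y => E (y, vzero))), bounded_op_inl; auto.
  - intros y. set (P := G (y, vzero)).
    assert (HFP : F P = (y, vzero)) by apply HFG.
    assert (HsndP : snd P = snd (E (S y, vzero))).
    { pose proof (Heq P) as H. rewrite HFP in H. unfold diag_id in H. simpl in H.
      rewrite <- H. reflexivity. }
    assert (Hsplit : P = vadd ((fst P, vzero) : dsum X X') ((vzero, snd P) : dsum X X')).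
    { destruct P as [p1 p2]. simpl. rewrite add_zero, vadd_0_r. reflexivity. }
    assert (Hy : y = vadd (fst (F (fst P, vzero))) (fst (F (vzero, snd (E (S y, vzero)))))).
    { change y with (fst ((y, vzero) : dsum Y Y')) at 1.
      rewrite <- HFP, Hsplit at 1. rewrite (proj1 (proj1 HF)), HsndP. reflexivity. }
    rewrite Hy at 1. apply vadd_sub_cancel.
Qed.

Section BoundedBelowImage.
Context {A B : Banach}.
Variable a : A -> B.
Hypothesis Ha : bounded_op a.
Variable M : A -> Prop.
Hypothesis HM : closed_subspace M.
Variable c : R.
Hypothesis Hc : forall y, M y -> vnorm y <= c * vnorm (a y).

Let Hlin : linear a := proj1 Ha.

Lemma image_closed_of_bounded_below : closed_subspace (fun x => exists y, M y /\ x = a y).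
Proof.
  split; [| split; [| split]].
  - exists vzero. split; [apply HM | symmetry; apply linear_zero; auto].
  - intros x1 x2 [y1 [M1 ->]] [y2 [M2 ->]]. exists (vadd y1 y2).
    split; [apply subspace_add | symmetry; apply linear_add]; auto.
  - intros c' x [y [My ->]]. exists (vscal c' y).
    split; [apply subspace_scal | symmetry; apply linear_scal]; auto.
  - intros u l Hu Hl. apply choice in Hu. destruct Hu as [y Hy].
    assert (Hcy : cauchy y).
    { intros eps Heps. set (c' := Rabs c + 1).
      destruct (conv_cauchy u l Hl (eps / c')) as [N0 HN0].
      { apply Rdiv_lt_0_compat; auto. unfold c'. pose proof (Rabs_pos c); lra. }
      exists N0. intros m n Hm Hn. specialize (HN0 m n Hm Hn).
      pose proof (Hc _ (subspace_sub M HM _ _ (proj1 (Hy m)) (proj1 (Hy n)))) as Hb.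
      rewrite linear_sub, <- (proj2 (Hy m)), <- (proj2 (Hy n)) in Hb by auto.
      pose proof (Rle_abs c). pose proof (norm_ge0 (vsub (u m) (u n))).
      apply (Rmult_lt_compat_l c') in HN0; [| unfold c'; pose proof (Rabs_pos c); lra].
      replace (c' * (eps / c')) with eps in HN0 by (field; unfold c'; pose proof (Rabs_pos c); lra).
      unfold c' in *. nra. }
    destruct (complete y Hcy) as [y' Hy']. exists y'. split.
    + apply (subspace_closed M HM y); auto. intros; apply Hy.
    + apply (conv_unique u); auto. apply (conv_ext (fun n => a (y n))).
      * intros; symmetry; apply Hy.
      * apply conv_bounded_op; auto.
Qed.

Lemma bounded_below_injective y y' : M y -> M y' -> a y = a y' -> y = y'.
Proof.
  intros Hy Hy' E. apply vsub_eq0, norm_eq0, Rle_antisym; [| apply norm_ge0].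
  pose proof (Hc _ (subspace_sub M HM _ _ Hy Hy')) as H.
  rewrite linear_sub, E, vsub_diag, norm_zero, Rmult_0_r in H; auto.
Qed.

Lemma topo_iso_image_of_bounded_below : topo_iso M (fun x => exists y, M y /\ x = a y).
Proof.
  assert (Hinv : forall x, exists y, (exists y, M y /\ x = a y) -> M y /\ x = a y).
  { intros x. destruct (classic (exists y, M y /\ x = a y)) as [[y Hy] | Hn].
    - exists y. auto.
    - exists vzero. intros; contradiction. }
  apply choice in Hinv. destruct Hinv as [g Hg].
  exists a, g. split; [| split; [| split; [| split; [| split; [| split; [| split]]]]]].
  - intros y Hy. eauto.
  - intros x Hx. apply Hg, Hx.
  - intros y Hy. destruct (Hg (a y)) as [Hgy E]; [eauto |].
    apply bounded_below_injective; auto.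
  - intros x Hx. symmetry. apply Hg, Hx.
  - intros; apply linear_add; auto.
  - intros; apply linear_scal; auto.
  - destruct (proj2 Ha) as [Ka HKa]. exists Ka. intros; apply HKa.
  - exists c. intros x Hx. destruct (Hg x Hx) as [Hgx E]. rewrite E at 2. apply Hc; auto.
Qed.

End BoundedBelowImage.

Theorem theorem5p3 (X Y : Banach) (T : X -> X) (S : Y -> Y) :
  bounded_op T -> bounded_op S ->
  equiv_after_ext X Y T S ->
  compact_op S ->
  exists (M : Y -> Prop) (N : X -> Prop),
    closed_subspace M /\ finite_codim M /\ closed_subspace N /\ topo_iso M N.
Proof.
  intros _ _ Hequiv HS.
  destruct (equiv_after_ext_factor X Y T S Hequiv) as [a [b [L [Ha [Hb [HL Hfactor]]]]]].
  assert (HK : compact_op (fun y => L (S y))) by (apply bounded_comp_compact_op; auto).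
  destruct (riesz_decomposition _ HK) as [M [HM [HMcodim [c Hc]]]].
  destruct (bounded_op_pos b Hb) as [Kb [PKb Hbb]].
  assert (Hbelow : forall y, M y -> vnorm y <= Rabs c * Kb * vnorm (a y)).
  { intros y Hy. eapply Rle_trans; [apply Hc; auto |]. unfold id_sub. rewrite Hfactor.
    pose proof (Hbb (a y)). pose proof (norm_ge0 (b (a y))).
    pose proof (Rle_abs c). pose proof (Rabs_pos c). nra. }
  exists M, (fun x => exists y, M y /\ x = a y). split; [| split; [| split]]; auto.
  - apply image_closed_of_bounded_below with (c := Rabs c * Kb); auto.
  - apply topo_iso_image_of_bounded_below with (c := Rabs c * Kb); auto.
Qed.
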